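(* For integers $n\ge1$ and $d\ge1$, let $N(n,d)$ be the number of cycle set structures on a fixed $n$-element set whose class divides $d$. If $d=p_1^{a_1}\cdots p_r^{a_r}$ is the prime factorization of $d$, then $$N(n,d)\le\prod_{i=1}^r N(n,p_i^{a_i}).$$
   Context: A cycle set structure on a set $S$ is a binary operation $*$ such that for every $s$ the map $t\mapsto s*t$ is a bijection of $S$ and $(s*t)*(s*u)=(t*s)*(t*u)$ for all $s,t,u\in S$. Write $S=\{s_1,\dots,s_n\}$, let $\psi(s)\in\mathfrak S_n$ satisfy $s_i*s_j=s_{\psi(s_i)(j)}$, $T(s)=s*s$, and $\psi_k(s)=\psi(T^{k-1}(s))\circ\cdots\circ\psi(T(s))\circ\psi(s)$. The class of the cycle set is the least integer $d\ge1$ with $\psi_d(s)=\mathrm{id}$ for all $s\in S$. (The paper does not specify whether cycle sets are counted up to isomorphism; here they are counted as operations on a fixed labelled set.) *)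

From mathcomp Require Import all_boot.
Set Implicit Arguments. Unset Strict Implicit. Unset Printing Implicit Defensive.

(* A binary operation on the labelled set S = 'I_n, as a curried finite function:
   op s t = s * t.  psi(s) is the map t |-> s * t. *)
Definition binop (n : nat) := {ffun 'I_n -> {ffun 'I_n -> 'I_n}}.

Definition is_cycle_set n (op : binop n) : bool :=
  [forall s, injectiveb (op s)] &&
  [forall s, forall t, forall u, op (op s t) (op s u) == op (op t s) (op t u)].

Definition Tmap n (op : binop n) (s : 'I_n) : 'I_n := op s s.

Fixpoint psik n (op : binop n) (k : nat) (s : 'I_n) : 'I_n -> 'I_n :=
  match k with
  | 0 => id
  | k'.+1 => fun t => op (iter k' (Tmap op) s) (psik op k' s t)
  end.

Definition psik_trivial n (op : binop n) (k : nat) : bool :=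
  [forall s, forall t, psik op k s t == t].

Definition is_class n (op : binop n) (c : nat) : bool :=
  (0 < c) && psik_trivial op c && [forall k : 'I_c, (0 < k) ==> ~~ psik_trivial op k].

(* the class exists and divides d (for d >= 1 the class is then <= d) *)
Definition class_divides n (op : binop n) (d : nat) : bool :=
  [exists c : 'I_d.+1, is_class op c && (c %| d)].

Definition Ncs (n d : nat) : nat :=
  #|[set op : binop n | is_cycle_set op && class_divides op d]|.

From mathcomp Require Import all_boot.
Set Implicit Arguments. Unset Strict Implicit. Unset Printing Implicit Defensive.

(* The k-cabling s *_k t := psi_k(s)(t) of a cycle set is again a cycle set,
   and psi_m of the k-cabling is psi_{km} of the original.  Hence, for coprime
   a and b, a cycle set whose class divides ab is sent to a pair (b-cabling,
   a-cabling) whose classes divide a and b respectively.  This map is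
   injective: since psi_{x+y} is determined by psi_x and psi_y, the pair
   determines psi_N for every N = ai + bj, and choosing N = 1 mod ab gives
   psi_N = psi_1, i.e. the operation itself. *)

Section Psik.
Variable n : nat.
Implicit Types (op : binop n) (s t u : 'I_n).

Lemma psik_diag op k s : psik op k s s = iter k (Tmap op) s.
Proof. by elim: k => //= k ->. Qed.

Lemma psikD op a b s t :
  psik op (a + b) s t = psik op b (psik op a s s) (psik op a s t).
Proof.
elim: b => [|b IHb]; first by rewrite addn0.
by rewrite addnS /= IHb psik_diag -iterD addnC.
Qed.

Lemma psikS op a s t : psik op a.+1 s t = psik op a (op s s) (op s t).
Proof. by rewrite -add1n psikD. Qed.

Definition psik_eq op1 op2 k := forall s t, psik op1 k s t = psik op2 k s t.

Lemma psik_eqD op1 op2 a b :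
  psik_eq op1 op2 a -> psik_eq op1 op2 b -> psik_eq op1 op2 (a + b).
Proof. by move=> Ea Eb s t; rewrite !psikD !Ea Eb. Qed.

Lemma psik_eqMn op1 op2 a j : psik_eq op1 op2 a -> psik_eq op1 op2 (a * j).
Proof.
move=> Ea; elim: j => [|j IHj]; first by rewrite muln0.
by rewrite mulnS; apply: psik_eqD.
Qed.

Lemma psik_eq1 op1 op2 : psik_eq op1 op2 1 -> op1 = op2.
Proof. by move=> E1; apply/ffunP=> s; apply/ffunP=> t; apply: E1. Qed.

Definition idop : binop n := [ffun _ => [ffun t => t]].

Lemma psik_idop k s t : psik idop k s t = t.
Proof. by elim: k => //= k ->; rewrite !ffunE. Qed.

Lemma psik_trivialP op k : reflect (psik_eq op idop k) (psik_trivial op k).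
Proof.
apply: (iffP forallP) => [triv s t | triv s]; last first.
  by apply/forallP => t; rewrite triv psik_idop.
by rewrite psik_idop; apply/eqP; move/forallP: (triv s).
Qed.

Lemma psik_eq_idop_subn op a b :
  psik_eq op idop a -> psik_eq op idop (a + b) -> psik_eq op idop b.
Proof. by move=> Ea Eab s t; have := Eab s t; rewrite psikD !Ea !psik_idop. Qed.

Lemma psik_modn op d m s t :
  psik_eq op idop d -> psik op m s t = psik op (m %% d) s t.
Proof.
move=> Ed; rewrite {1}(divn_eq m d) mulnC psikD.
by rewrite !(psik_eqMn (m %/ d) Ed) !psik_idop.
Qed.

Lemma class_dividesP op d :
  0 < d -> reflect (psik_eq op idop d) (class_divides op d).
Proof.
move=> d_gt0; apply: (iffP idP).
  case/existsP=> c /andP[/andP[/andP[_ /psik_trivialP Ec] _] c_d].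
  by rewrite -(divnK c_d) mulnC; apply: psik_eqMn.
move=> Ed; pose P m := (0 < m) && psik_trivial op m.
have P_d : P d by rewrite /P d_gt0; apply/psik_trivialP.
have [c /andP[c_gt0 /psik_trivialP Ec] c_min] := ex_minnP (ex_intro P d P_d).
have c_le_d : c < d.+1 by rewrite ltnS c_min.
have c_d : c %| d.
  have Er : psik_eq op idop (d %% c).
    apply: (@psik_eq_idop_subn _ (d %/ c * c)).
      by rewrite mulnC; apply: psik_eqMn.
    by rewrite -divn_eq.
  apply: contraT; rewrite /dvdn -lt0n => r_gt0.
  have : c <= d %% c by rewrite c_min // /P r_gt0; apply/psik_trivialP.
  by rewrite leqNgt ltn_mod c_gt0.
apply/existsP; exists (Ordinal c_le_d); rewrite /= c_d andbT /is_class c_gt0 /=.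
apply/andP; split; first exact/psik_trivialP.
apply/forallP=> k; apply/implyP=> k_gt0; apply: contraTN (ltn_ord k) => Pk.
by rewrite -leqNgt c_min // /P k_gt0.
Qed.

Definition cabling op k : binop n := [ffun s => [ffun t => psik op k s t]].

Lemma psik_eq_cabling op1 op2 k :
  cabling op1 k = cabling op2 k -> psik_eq op1 op2 k.
Proof. by move=> E s t; have := congr1 (fun op => op s t) E; rewrite !ffunE. Qed.

Lemma psik_cabling op k m s t : psik (cabling op k) m s t = psik op (k * m) s t.
Proof.
elim: m t => [|m IHm] t; first by rewrite muln0.
rewrite /= IHm mulnS addnC psikD !ffunE psik_diag; congr (psik _ _ _ _).
rewrite mulnC iterM; apply: eq_iter => x.
by rewrite /Tmap !ffunE psik_diag.
Qed.

Definition cycle_law op := forall s t u, op (op s t) (op s u) = op (op t s) (op t u).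

Lemma is_cycle_setP op :
  reflect ((forall s, injective (op s)) /\ cycle_law op) (is_cycle_set op).
Proof.
apply: (iffP andP) => [[/forallP inj /forallP law] | [inj law]]; split.
- by move=> s; apply/injectiveP.
- by move=> s t u; apply/eqP; move/forallP: (law s) => /(_ t)/forallP/(_ u).
- by apply/forallP=> s; apply/injectiveP.
- by do 3!apply/forallP=> ?; apply/eqP.
Qed.

Lemma psik_cycle_law op : cycle_law op -> forall a b s t u,
  psik op b (psik op a s t) (psik op a s u) = psik op a (psik op b t s) (psik op b t u).
Proof.
move=> law.
pose I a b := forall s t u,
  psik op b (psik op a s t) (psik op a s u) = psik op a (psik op b t s) (psik op b t u).
have I_sym a b : I a b -> I b a by move=> Iab s t u; rewrite Iab.
have I_S a b : I a b -> I 1 b -> I a.+1 b.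
  move=> Iab I1b s t u; rewrite !psikS Iab.
  by have /= -> := I1b s t u; have /= -> := I1b s t s.
have I_1 a : I a 1 by elim: a => [|a IHa] s t u //; apply: I_S => // ? ? ?; apply: law.
by elim=> [|a IHa] b s t u //; apply: I_S => //; apply: I_sym.
Qed.

Lemma cabling_cycle_set op k : is_cycle_set op -> is_cycle_set (cabling op k).
Proof.
case/is_cycle_setP=> inj law; apply/is_cycle_setP; split.
  move=> s x y; rewrite !ffunE.
  by elim: k x y => [|k IHk] x y //= /inj; apply: IHk.
by move=> s t u; rewrite !ffunE; apply: psik_cycle_law.
Qed.

End Psik.

Arguments idop {n}.

Section Counting.
Variable n : nat.

Definition cycle_sets_class_dvd d :=
  [set op : binop n | is_cycle_set op && class_divides op d].

Lemma cabling_class_dvd (op : binop n) a b :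
  0 < a -> 0 < b -> class_divides op (a * b) -> class_divides (cabling op b) a.
Proof.
move=> a_gt0 b_gt0 /class_dividesP; rewrite muln_gt0 a_gt0 b_gt0 => /(_ isT) Eab.
by apply/class_dividesP => // s t; rewrite psik_cabling psik_idop mulnC Eab psik_idop.
Qed.

Lemma coprime_addMn_mod1 a b :
  coprime a b -> exists i j, a * i + b * j = 1 %[mod a * b].
Proof.
move=> co_ab; exists (egcdn a b).1, (egcdn b a).1.
have -> : a * (egcdn a b).1 + b * (egcdn b a).1 = chinese a b 1 1.
  by rewrite /chinese !mul1n addnC.
apply/eqP; rewrite chinese_remainder //.
by rewrite (chinese_modl co_ab) (chinese_modr co_ab) !eqxx.
Qed.

Lemma cabling_pair_inj a b : 0 < a -> 0 < b -> coprime a b ->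
  {in cycle_sets_class_dvd (a * b) &,
    injective (fun op : binop n => (cabling op b, cabling op a))}.
Proof.
move=> a_gt0 b_gt0 co_ab op1 op2.
have ab_gt0 : 0 < a * b by rewrite muln_gt0 a_gt0.
rewrite !inE => /andP[_ /(class_dividesP _ ab_gt0) E1].
move=> /andP[_ /(class_dividesP _ ab_gt0) E2].
case=> /psik_eq_cabling Eb /psik_eq_cabling Ea.
have [i [j N_1]] := coprime_addMn_mod1 co_ab.
have EN : psik_eq op1 op2 (a * i + b * j) by apply: psik_eqD; apply: psik_eqMn.
have psik1_N (op : binop n) : psik_eq op idop (a * b) ->
    forall s t, psik op 1 s t = psik op (a * i + b * j) s t.
  by move=> Eop s t; rewrite (psik_modn _ _ _ Eop) -N_1 -(psik_modn _ _ _ Eop).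
by apply: psik_eq1 => s t; rewrite (psik1_N _ E1) (psik1_N _ E2) EN.
Qed.

Lemma Ncs_coprime_mul a b : 0 < a -> 0 < b -> coprime a b ->
  Ncs n (a * b) <= Ncs n a * Ncs n b.
Proof.
move=> a_gt0 b_gt0 co_ab.
rewrite /Ncs -!/(cycle_sets_class_dvd _) -cardsX.
rewrite -(card_in_imset (cabling_pair_inj a_gt0 b_gt0 co_ab)).
apply/subset_leq_card/subsetP => x /imsetP[op]; rewrite inE => /andP[cs_op cd_op] ->.
rewrite !inE /= !cabling_cycle_set //= cabling_class_dvd //=.
by rewrite cabling_class_dvd // mulnC.
Qed.

Lemma Ncs1 : Ncs n 1 <= 1.
Proof.
rewrite -[X in _ <= X](cards1 (@idop n)); apply/subset_leq_card/subsetP => op.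
by rewrite !inE => /andP[_ /(class_dividesP _ (isT : 0 < 1)) /psik_eq1 ->].
Qed.

End Counting.

Lemma submul_prime_powers (f : nat -> nat) :
  f 1 <= 1 ->
  (forall a b, 0 < a -> 0 < b -> coprime a b -> f (a * b) <= f a * f b) ->
  forall d, 0 < d -> f d <= \prod_(p <- primes d) f (p ^ logn p d).
Proof.
move=> f1 fM d d_gt0.
rewrite {1}(prod_prime_decomp d_gt0) prime_decompE big_map /=.
elim: (primes d) (primes_uniq d) (all_prime_primes d) => [|p r IHr].
  by rewrite !big_nil.
rewrite /= => /andP[p_r r_uniq] /andP[p_pr r_pr]; rewrite !big_cons.
have q_pr q : q \in r -> prime q by move/allP: r_pr; apply.
have p_gt0 : 0 < p ^ logn p d by rewrite expn_gt0 prime_gt0.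
have r_gt0 : 0 < \prod_(q <- r) q ^ logn q d.
  by rewrite big_seq prodn_gt0 // => q /q_pr/prime_gt0; rewrite expn_gt0 => ->.
have p_r_coprime : coprime (p ^ logn p d) (\prod_(q <- r) q ^ logn q d).
  rewrite coprimeXl // big_seq; elim/big_ind: _ => [|x y|q q_r].
  - exact: coprimen1.
  - by rewrite coprimeMr => -> ->.
  rewrite coprimeXr // prime_coprime // dvdn_prime2 ?(q_pr q) //.
  by apply: contraNN p_r => /eqP ->.
by apply: leq_trans (fM _ _ p_gt0 r_gt0 p_r_coprime) _; rewrite leq_mul ?IHr.
Qed.

Theorem mainTheorem14 (n d : nat) : 0 < n -> 0 < d ->
  Ncs n d <= \prod_(p <- primes d) Ncs n (p ^ logn p d).
Proof.
move=> _; apply: submul_prime_powers; [exact: Ncs1 | exact: Ncs_coprime_mul].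
Qed.
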